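(* Let $K\ge1$ and let $\mathfrak{L}\subset\mathcal{P}^2_K(X)$ be a $\mathfrak{Q}_L$-clusterable family. Then for every $\Gamma\in\mathcal{M}(\mathfrak{L})$ the Bayes optimal partition is well-defined: there is a unique $\Lambda\in\mathfrak{L}$ with $m(\Lambda)=\Gamma$, and hence a unique Bayes optimal partition $\pi_\Gamma:=\pi_\Lambda$.
   Context: $X$ is a compact metric space and all probability measures are absolutely continuous w.r.t. a base measure $\zeta$. $\mathcal{P}(X)$: regular Borel probability measures with finite $r$-th moments with Hellinger metric $\rho$; $\mathcal{P}^2_s(X)$: probability measures on $\mathcal{P}(X)$ with at most $s$ atoms; $m(\Lambda)=\sum_k\lambda_k\gamma_k$; $\mathcal{M}(\mathfrak{L})=\{m(\Lambda):\Lambda\in\mathfrak{L}\}$. For $\Lambda=\sum_{k=1}^K\lambda_k\delta_{\gamma_k}$ with $f_k$ the density of $\gamma_k$, $c_\Lambda(x)=\arg\max_k\lambda_kf_k(x)$ on $X_0=X\setminus E_0$, $E_0=\bigcup_{i\ne j}\{x:\lambda_if_i(x)=\lambda_jf_j(x)\}$; the Bayes optimal partition $\pi_\Lambda$ of $X_0$ is the partition into classes of the relation $x\sim y\iff c_\Lambda(x)=c_\Lambda(y)$. Fixed base family $\mathfrak{Q}$ with $\mathfrak{Q}_L=\mathfrak{Q}\cap\mathcal{P}^2_L(X)$, $\mathcal{M}(\mathfrak{Q}_L)$ identifiable. $T_L\Gamma$: minimizers of $\rho(Q,\Gamma)$ over $\mathcal{M}(\mathfrak{Q}_L)$ (assumed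 unique for $\Gamma\in\mathcal{M}(\mathfrak{L})$), with mixing measure $\Omega^*=M_L(T_L\Gamma)=\sum_\ell\omega^*_\ell\delta_{q^*_\ell}$, $M_L(\mathfrak{L})=\{M_L(T_Lm(\Lambda)):\Lambda\in\mathfrak{L}\}$. For $\alpha:[L]\to[K]$: $\bar\omega^*_k(\alpha)=\sum_{\ell\in\alpha^{-1}(k)}\omega^*_\ell$, $Q^*_k(\alpha)=\bar\omega^*_k(\alpha)^{-1}\sum_{\ell\in\alpha^{-1}(k)}\omega^*_\ell q^*_\ell$. $\Lambda$ is $\mathfrak{Q}_L$-regular if the projections exist uniquely for large $L$ and converge to $m(\Lambda)$, and some sequence $\alpha_L:[L]\to[K]$ ($\Lambda$-regular) has $Q^*_k(\alpha_L)\to\gamma_k$, $\bar\omega^*_k(\alpha_L)\to\lambda_k$. $\mathfrak{L}$ is $\mathfrak{Q}_L$-clusterable if all members are regular and there are functions $\chi_L:M_L(\mathfrak{L})\to\{[L]\to[K]\}$ with $\chi_L(M_L(T_Lm(\Lambda)))$ $\Lambda$-regular for every $\Lambda\in\mathfrak{L}$. *)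

From HB Require Import structures.
From Stdlib Require Import ClassicalEpsilon.
From mathcomp Require Import all_boot all_order all_algebra.
From mathcomp Require Import all_classical all_reals all_analysis.
Set Implicit Arguments. Unset Strict Implicit. Unset Printing Implicit Defensive.
Import Order.TTheory GRing.Theory Num.Theory.
Import numFieldNormedType.Exports.
Local Open Scope classical_set_scope.
Local Open Scope ring_scope.

Section Setup.
Context {R : realType} {d : measure_display} {X : measurableType d}.

Definition is_metric (dist : X -> X -> R) : Prop :=
  [/\ (forall x y, 0 <= dist x y),
      (forall x y, dist x y = 0 <-> x = y),
      (forall x y, dist x y = dist y x) &
      (forall x y z, dist x z <= dist x y + dist y z)].

Definition dball (dist : X -> X -> R) (x : X) (e : R) : set X :=
  [set y | dist x y < e].

Definition dopen (dist : X -> X -> R) (A : set X) : Prop :=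
  forall x, A x -> exists2 e : R, 0 < e & dball dist x e `<=` A.

Definition dclosed (dist : X -> X -> R) (A : set X) : Prop := dopen dist (~` A).

Definition dcompact (dist : X -> X -> R) : Prop :=
  forall (I : Type) (U : I -> set X), (forall i, dopen dist (U i)) ->
    (forall x, exists i, U i x) ->
    exists s : seq I, forall x, exists i, List.In i s /\ U i x.

Definition borel_of (dist : X -> X -> R) : Prop :=
  @measurable d X = <<s dopen dist >>.

Variable zeta : {sigma_finite_measure set X -> \bar R}.

Definition meq (mu nu : set X -> \bar R) : Prop :=
  forall A, measurable A -> mu A = nu A.

Definition is_density (mu : set X -> \bar R) (f : X -> R) : Prop :=
  [/\ measurable_fun setT f, (forall x, 0 <= f x) &
      forall A, measurable A -> mu A = (\int[zeta]_(x in A) (f x)%:E)%E].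

Definition dens (mu : set X -> \bar R) : X -> R :=
  epsilon (inhabits (fun _ : X => 0 : R)) (is_density mu).

Definition hell_dens (f g : X -> R) : R :=
  Num.sqrt (fine (\int[zeta]_x
     (((Num.sqrt (f x) - Num.sqrt (g x)) ^+ 2) / 2)%:E)%E).

Definition hell (mu nu : set X -> \bar R) : R := hell_dens (dens mu) (dens nu).

Definition regular_measure (dist : X -> X -> R) (mu : set X -> \bar R) : Prop :=
  forall A, measurable A ->
    mu A = ereal_inf [set mu U | U in [set U | dopen dist U /\ A `<=` U]] /\
    mu A = ereal_sup [set mu C | C in [set C | dclosed dist C /\ C `<=` A]].

Definition finite_moment (dist : X -> X -> R) (r : R) (mu : probability X R) : Prop :=
  exists x0 : X, (\int[mu]_x ((dist x0 x) `^ r)%:E < +oo)%E.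

Definition PX (dist : X -> X -> R) (r : R) (mu : probability X R) : Prop :=
  [/\ mu `<< zeta, regular_measure dist mu & finite_moment dist r mu].

(** ** Finite mixing measures with (at most) K labelled atoms:
    Lambda = sum_k Lambda.1 k * delta_(Lambda.2 k) *)
Definition mixing (K : nat) : Type := ('I_K -> R) * ('I_K -> probability X R).

Definition P2 (dist : X -> X -> R) (r : R) (K : nat) : set (mixing K) :=
  [set Lam | [/\ (forall k, 0 <= Lam.1 k), \sum_(k < K) Lam.1 k = 1 &
                 forall k, PX dist r (Lam.2 k)]].

Definition is_mix (K : nat) (Lam : mixing K) (Gam : set X -> \bar R) : Prop :=
  forall A, measurable A ->
    Gam A = (\sum_(k < K) (Lam.1 k)%:E * Lam.2 k A)%E.

Definition Mof (K : nat) (Lf : set (mixing K)) : set (probability X R) :=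
  [set Gam | exists2 Lam, Lf Lam & is_mix Lam Gam].

(* equality of two labelled mixing measures as measures on P(X) *)
Definition same_mixing (L : nat) (Om Om' : mixing L) : Prop :=
  forall q : probability X R,
    \sum_(l < L | `[< meq (Om.2 l) q >]) Om.1 l =
    \sum_(l < L | `[< meq (Om'.2 l) q >]) Om'.1 l.

Definition identifiable (L : nat) (QL : set (mixing L)) : Prop :=
  forall Om Om' (Gam : probability X R), QL Om -> QL Om' ->
    is_mix Om Gam -> is_mix Om' Gam -> same_mixing Om Om'.

Definition is_proj (L : nat) (QL : set (mixing L)) (Gam Q : probability X R) : Prop :=
  Mof QL Q /\ forall Q', Mof QL Q' -> hell Q Gam <= hell Q' Gam.

Definition unique_proj (L : nat) (QL : set (mixing L)) (Gam Q : probability X R) : Prop :=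
  is_proj QL Gam Q /\ forall Q', is_proj QL Gam Q' -> meq Q' Q.

Definition wbar (L K : nat) (Om : mixing L) (al : 'I_L -> 'I_K) (k : 'I_K) : R :=
  \sum_(l < L | al l == k) Om.1 l.

Definition Qstar_dens (L K : nat) (Om : mixing L) (al : 'I_L -> 'I_K) (k : 'I_K) : X -> R :=
  fun x => (wbar Om al k)^-1 * \sum_(l < L | al l == k) Om.1 l * dens (Om.2 l) x.

Section Clustering.
Local Unset Implicit Arguments.
Variables (Qf : forall L : nat, set (mixing L))
          (ML : forall L : nat, probability X R -> mixing L).
Local Set Implicit Arguments.
(* ML L Gam is the (labelled) mixing measure M_L(T_L Gam) of the projection *)

Definition alpha_regular (K : nat) (Lam : mixing K) (Gam : probability X R)
    (al : forall L : nat, 'I_L -> 'I_K) : Prop :=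
  forall k : 'I_K,
    (fun L : nat => hell_dens (Qstar_dens (ML L Gam) (al L) k) (dens (Lam.2 k)))
       @ \oo --> (0 : R) /\
    (fun L : nat => wbar (ML L Gam) (al L) k) @ \oo --> Lam.1 k.

Definition QL_regular (K : nat) (Lam : mixing K) : Prop :=
  forall Gam : probability X R, is_mix Lam Gam ->
  [/\ (exists N, forall L, (N <= L)%N -> exists Q, unique_proj (Qf L) Gam Q),
      (forall e : R, 0 < e -> exists N, forall L, (N <= L)%N ->
          forall Q, is_proj (Qf L) Gam Q -> hell Q Gam < e) &
      exists al : forall L : nat, 'I_L -> 'I_K, alpha_regular Lam Gam al].

Definition QL_clusterable (K : nat) (Lf : set (mixing K)) : Prop :=
  (forall Lam, Lf Lam -> QL_regular Lam) /\
  exists chi : forall L : nat, mixing L -> ('I_L -> 'I_K),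
    forall Lam, Lf Lam -> forall Gam : probability X R, is_mix Lam Gam ->
      alpha_regular Lam Gam (fun L => chi L (ML L Gam)).

End Clustering.

Definition E0 (K : nat) (Lam : mixing K) : set X :=
  [set x | exists i j : 'I_K, i <> j /\
      Lam.1 i * dens (Lam.2 i) x = Lam.1 j * dens (Lam.2 j) x].

Definition X0 (K : nat) (Lam : mixing K) : set X := ~` E0 Lam.

Definition is_argmax (K : nat) (Lam : mixing K) (x : X) (k : 'I_K) : Prop :=
  forall j : 'I_K, Lam.1 j * dens (Lam.2 j) x <= Lam.1 k * dens (Lam.2 k) x.

Definition bayes_rel (K : nat) (Lam : mixing K) (x y : X) : Prop :=
  forall k : 'I_K, is_argmax Lam x k <-> is_argmax Lam y k.

Definition bayes_partition (K : nat) (Lam : mixing K) : set (set X) :=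
  [set C | exists2 x, X0 Lam x & C = [set y | X0 Lam y /\ bayes_rel Lam x y]].

Definition mix_eq (K : nat) (Lam Lam' : mixing K) : Prop :=
  Lam.1 = Lam'.1 /\ forall k, meq (Lam.2 k) (Lam'.2 k).

End Setup.

Arguments P2 {R d X} zeta dist r K _.

From mathcomp Require Import all_boot all_order all_algebra.
From mathcomp Require Import all_classical all_reals all_analysis.
From mathcomp Require Import ring measurable_realfun.
From Stdlib Require Import ClassicalEpsilon.
Import Order.TTheory GRing.Theory Num.Theory.
Import numFieldNormedType.Exports.
Local Open Scope classical_set_scope.
Local Open Scope ring_scope.

(* Clusterability provides a single sequence of labellings
   chi_L (M_L (T_L Gamma)), which depends on Gamma alone, that is regular for
   every Lambda of the family with m(Lambda) = Gamma.  So for two such Lambda,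
   Lambda' the merged weights of the projections converge to both lambda_k
   and lambda'_k, and the merged components Q*_k converge in Hellinger
   distance to both gamma_k and gamma'_k.  Limits of weights are unique, and
   so are Hellinger limits of densities, because the squared Hellinger
   integral H satisfies H(f, g) <= 2 H(h, f) + 2 H(h, g), and H(f, g) = 0
   forces f = g almost everywhere.  Hence Lambda = Lambda', and the Bayes
   partition, which only depends on the weighted densities lambda_k f_k, is
   determined by Gamma. *)

Section HellingerIntegrand.
Context {R : realType}.

Definition hell_integrand (a b : R) : R := (Num.sqrt a - Num.sqrt b) ^+ 2 / 2.

Lemma hell_integrand_ge0 a b : 0 <= hell_integrand a b.
Proof. by rewrite divr_ge0 // sqr_ge0. Qed.

Lemma hell_integrand_le_add a b : 0 <= a -> 0 <= b -> hell_integrand a b <= a + b.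
Proof.
move=> a0 b0; rewrite /hell_integrand -{2}(sqr_sqrtr a0) -{2}(sqr_sqrtr b0).
set u := Num.sqrt a; set v := Num.sqrt b.
rewrite -subr_ge0; have -> : u ^+ 2 + v ^+ 2 - (u - v) ^+ 2 / 2 = (u + v) ^+ 2 / 2.
  by field.
by rewrite divr_ge0 // sqr_ge0.
Qed.

Lemma hell_integrand_quasi_triangle a b c :
  hell_integrand a b <= 2 * hell_integrand c a + 2 * hell_integrand c b.
Proof.
rewrite /hell_integrand; set u := Num.sqrt a; set v := Num.sqrt b; set w := Num.sqrt c.
rewrite -subr_ge0.
have -> : 2 * ((w - u) ^+ 2 / 2) + 2 * ((w - v) ^+ 2 / 2) - (u - v) ^+ 2 / 2
  = (w - u + (w - v)) ^+ 2 / 2 by field.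
by rewrite divr_ge0 // sqr_ge0.
Qed.

Lemma hell_integrand_eq0 a b : 0 <= a -> 0 <= b -> hell_integrand a b = 0 -> a = b.
Proof.
move=> a0 b0 /eqP; rewrite /hell_integrand mulf_eq0 invr_eq0 pnatr_eq0 orbF.
by rewrite sqrf_eq0 subr_eq0 => /eqP e; rewrite -(sqr_sqrtr a0) -(sqr_sqrtr b0) e.
Qed.

End HellingerIntegrand.

Section MixingMeasures.
Context {R : realType} {d : measure_display} {X : measurableType d}.
Variable zeta : {sigma_finite_measure set X -> \bar R}.

Lemma measurable_int_EFin (f : X -> R) :
  zeta.-integrable setT (EFin \o f) -> measurable_fun setT f.
Proof. by move=> /measurable_int /measurable_EFinP. Qed.

Definition hell_int (f g : X -> R) : \bar R :=
  (\int[zeta]_x (hell_integrand (f x) (g x))%:E)%E.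

Lemma hell_int_ge0 (f g : X -> R) : (0 <= hell_int f g)%E.
Proof. by apply: integral_ge0 => x _; rewrite lee_fin hell_integrand_ge0. Qed.

(* Holds even when the integral diverges, since [fine +oo = 0]. *)
Lemma hell_dens_sqr (f g : X -> R) : hell_dens zeta f g ^+ 2 = fine (hell_int f g).
Proof. by rewrite sqr_sqrtr // fine_ge0 // hell_int_ge0. Qed.

Lemma measurable_hell_integrand (f g : X -> R) :
  measurable_fun setT f -> measurable_fun setT g ->
  measurable_fun setT (fun x => hell_integrand (f x) (g x)).
Proof.
have msqrt := continuous_measurable_fun (@sqrt_continuous R).
move=> mf mg; apply: measurable_funM => //.
by apply: measurable_funX; apply: measurable_funB; exact: measurableT_comp.
Qed.

Lemma hell_int_fin_num (f g : X -> R) : (forall x, 0 <= f x) -> (forall x, 0 <= g x) ->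
  zeta.-integrable setT (EFin \o f) -> zeta.-integrable setT (EFin \o g) ->
  hell_int f g \is a fin_num.
Proof.
move=> f0 g0 intf intg; rewrite ge0_fin_numE ?hell_int_ge0 //.
have mhell : measurable_fun setT (fun x => hell_integrand (f x) (g x)).
  by apply: measurable_hell_integrand; exact: measurable_int_EFin.
have inthell : zeta.-integrable setT (fun x => (hell_integrand (f x) (g x))%:E).
  apply: le_integrable (integrableD measurableT intf intg) => //.
    exact/measurable_EFinP.
  move=> x _ /=; rewrite lee_fin !ger0_norm ?hell_integrand_ge0 ?addr_ge0 //.
  exact: hell_integrand_le_add.
move/integrableP: inthell => [_].
by under eq_integral do rewrite gee0_abs ?lee_fin ?hell_integrand_ge0 //.
Qed.

Lemma hell_int_quasi_triangle (f g h : X -> R) : measurable_fun setT f ->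
  measurable_fun setT g -> measurable_fun setT h ->
  (hell_int f g <= 2%:E * hell_int h f + 2%:E * hell_int h g)%E.
Proof.
move=> mf mg mh.
have mhell (u v : X -> R) : measurable_fun setT u -> measurable_fun setT v ->
    measurable_fun setT (fun x => (hell_integrand (u x) (v x))%:E).
  by move=> mu mv; exact/measurable_EFinP/measurable_hell_integrand.
have hell0 (u v : X -> R) x : (0 <= (hell_integrand (u x) (v x))%:E)%E.
  by rewrite lee_fin hell_integrand_ge0.
rewrite /hell_int -!ge0_integralZl_EFin //; try exact: mhell.
rewrite -ge0_integralD //;
  try by move=> x _; rewrite -EFinM lee_fin mulr_ge0 ?hell_integrand_ge0.
all: try by apply: emeasurable_funM => //; exact: mhell.
apply: ge0_le_integral => //; first exact: mhell.
- by apply: emeasurable_funD; apply: emeasurable_funM => //; exact: mhell.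
- by move=> x _; rewrite -!EFinM -EFinD lee_fin hell_integrand_quasi_triangle.
Qed.

Lemma hell_dens_quasi_triangle (f g h : X -> R) :
  (forall x, 0 <= f x) -> (forall x, 0 <= g x) -> (forall x, 0 <= h x) ->
  zeta.-integrable setT (EFin \o f) -> zeta.-integrable setT (EFin \o g) ->
  zeta.-integrable setT (EFin \o h) ->
  hell_dens zeta f g ^+ 2 <=
    2 * hell_dens zeta h f ^+ 2 + 2 * hell_dens zeta h g ^+ 2.
Proof.
move=> f0 g0 h0 intf intg inth.
rewrite !hell_dens_sqr -lee_fin EFinD !EFinM !fineK ?hell_int_fin_num //.
by apply: hell_int_quasi_triangle; exact: measurable_int_EFin.
Qed.

Lemma hell_int_eq0_ae (f g : X -> R) : measurable_fun setT f -> measurable_fun setT g ->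
  (forall x, 0 <= f x) -> (forall x, 0 <= g x) ->
  hell_int f g = 0%E -> {ae zeta, forall x, f x = g x}.
Proof.
move=> mf mg f0 g0 hell0.
have mhell : measurable_fun setT (fun x => (hell_integrand (f x) (g x))%:E).
  by apply/measurable_EFinP; exact: measurable_hell_integrand.
have /(ae_eq_integral_abs zeta measurableT mhell).1 :
    (\int[zeta]_x `|(hell_integrand (f x) (g x))%:E| = 0)%E.
  by under eq_integral do rewrite gee0_abs ?lee_fin ?hell_integrand_ge0 //.
apply: filterS => x /(_ I) [].
exact: hell_integrand_eq0.
Qed.

Lemma hell_int_eq0_of_cvg (f g : X -> R) (h : nat -> X -> R) :
  (forall x, 0 <= f x) -> (forall x, 0 <= g x) ->
  zeta.-integrable setT (EFin \o f) -> zeta.-integrable setT (EFin \o g) ->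
  (\forall n \near \oo,
     (forall x, 0 <= h n x) /\ zeta.-integrable setT (EFin \o h n)) ->
  hell_dens zeta (h n) f @[n --> \oo] --> 0 ->
  hell_dens zeta (h n) g @[n --> \oo] --> 0 ->
  hell_int f g = 0%E.
Proof.
move=> f0 g0 intf intg hn cvgf cvgg.
pose bound n := 2 * hell_dens zeta (h n) f ^+ 2 + 2 * hell_dens zeta (h n) g ^+ 2.
have cvg_bound : bound n @[n --> \oo] --> 0.
  rewrite (_ : 0 = 2 * (0 * 0) + 2 * (0 * 0)); last by rewrite !mulr0 addr0.
  by apply: cvgD; apply: cvgM; (try exact: cvg_cst); exact: cvgM.
have : fine (hell_int f g) <= lim (bound n @[n --> \oo]).
  apply: limr_ge; first by apply/cvg_ex; exists 0.
  apply: filterS hn => n [h0 inth].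
  by rewrite -hell_dens_sqr hell_dens_quasi_triangle.
rewrite (cvg_lim _ cvg_bound) // => le0.
rewrite -(fineK (hell_int_fin_num _ _ f0 g0 intf intg)); congr EFin.
by apply/le_anti; rewrite le0 fine_ge0 ?hell_int_ge0.
Qed.

Lemma is_density_dens (mu : probability X R) : mu `<< zeta ->
  is_density zeta mu (dens zeta mu).
Proof.
move=> muz; apply: epsilon_spec.
have [g [g0 gfin intg gE]] := radon_nikodym_sigma_finite muz.
exists (fine \o g); split => [|x|A mA].
- exact: measurableT_comp (measurable_int zeta intg).
- exact: fine_ge0.
- by rewrite gE //; apply: eq_integral => x _; rewrite /= fineK.
Qed.

Lemma meq_dens (mu nu : set X -> \bar R) : meq mu nu -> dens zeta mu = dens zeta nu.
Proof.
move=> munu; rewrite /dens; congr epsilon; apply/funext => f; apply/propext.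
split=> -[mf f0 muf]; split=> // A mA.
- by rewrite -munu // muf.
- by rewrite munu // muf.
Qed.

Lemma integrable_dens (mu : probability X R) : mu `<< zeta ->
  zeta.-integrable setT (EFin \o dens zeta mu).
Proof.
move=> /is_density_dens [mf f0 muf]; apply/integrableP; split.
  exact/measurable_EFinP.
under eq_integral do rewrite gee0_abs ?lee_fin //.
by rewrite -muf // probability_setT ltry.
Qed.

Lemma dens_ge0 (mu : probability X R) : mu `<< zeta -> forall x, 0 <= dens zeta mu x.
Proof. by case/is_density_dens. Qed.

Lemma meq_of_hell_int_eq0 (mu nu : probability X R) : mu `<< zeta -> nu `<< zeta ->
  hell_int (dens zeta mu) (dens zeta nu) = 0%E -> meq mu nu.
Proof.
move=> /is_density_dens [mf f0 muf] /is_density_dens [mg g0 nug] hell0 A mA.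
rewrite muf // nug //; apply: ae_eq_integral => //.
- exact/measurable_funTS/measurable_EFinP.
- exact/measurable_funTS/measurable_EFinP.
by rewrite /ae_eq; apply: filterS (hell_int_eq0_ae _ _ mf mg f0 g0 hell0) => x ->.
Qed.

Lemma meq_of_hell_cvg (mu nu : probability X R) (h : nat -> X -> R) :
  mu `<< zeta -> nu `<< zeta ->
  (\forall n \near \oo,
     (forall x, 0 <= h n x) /\ zeta.-integrable setT (EFin \o h n)) ->
  hell_dens zeta (h n) (dens zeta mu) @[n --> \oo] --> 0 ->
  hell_dens zeta (h n) (dens zeta nu) @[n --> \oo] --> 0 ->
  meq mu nu.
Proof.
move=> muz nuz hn cvgmu cvgnu; apply: meq_of_hell_int_eq0 => //.
exact: (hell_int_eq0_of_cvg _ _ _ (dens_ge0 _ muz) (dens_ge0 _ nuz)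
  (integrable_dens _ muz) (integrable_dens _ nuz) hn).
Qed.

Lemma P2_abs_cont (dist : X -> X -> R) r K (Lam : mixing K) :
  P2 zeta dist r K Lam -> forall k, Lam.2 k `<< zeta.
Proof. by case=> _ _ PXLam k; case: (PXLam k). Qed.

Lemma Qstar_dens_ge0 L K (Om : mixing L) (al : 'I_L -> 'I_K) k :
  (forall l, 0 <= Om.1 l) -> (forall l, Om.2 l `<< zeta) ->
  forall x, 0 <= Qstar_dens zeta Om al k x.
Proof.
move=> Om0 Omz x; apply: mulr_ge0; first by rewrite invr_ge0 sumr_ge0.
by apply: sumr_ge0 => l _; exact: mulr_ge0 (Om0 l) (dens_ge0 _ (Omz l) x).
Qed.

Lemma integrable_Qstar_dens L K (Om : mixing L) (al : 'I_L -> 'I_K) k :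
  (forall l, Om.2 l `<< zeta) ->
  zeta.-integrable setT (EFin \o Qstar_dens zeta Om al k).
Proof.
move=> Omz.
have -> : EFin \o Qstar_dens zeta Om al k = fun x => ((wbar Om al k)^-1%:E *
    \sum_(l < L | al l == k) (Om.1 l)%:E * (dens zeta (Om.2 l) x)%:E)%E.
  by apply/funext => x; rewrite /= /Qstar_dens EFinM -sumEFin.
apply: integrableZl => //; apply: integrable_sum => // l _.
by apply: integrableZl => //; exact: integrable_dens.
Qed.

Lemma alpha_regular_mix_eq (ML : forall L, probability X R -> mixing L) K
    (Lam Lam' : mixing K) (Gam : probability X R) (al : forall L, 'I_L -> 'I_K) :
  (\forall L \near \oo,
     (forall l, 0 <= (ML L Gam).1 l) /\ forall l, (ML L Gam).2 l `<< zeta) ->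
  (forall k, Lam.2 k `<< zeta) -> (forall k, Lam'.2 k `<< zeta) ->
  alpha_regular zeta ML Lam Gam al -> alpha_regular zeta ML Lam' Gam al ->
  mix_eq Lam Lam'.
Proof.
move=> MLP Lamz Lam'z reg reg'; split.
  apply/funext => k; have [_ w] := reg k; have [_ w'] := reg' k.
  by rewrite -(cvg_lim _ w) // -(cvg_lim _ w').
move=> k; have [h _] := reg k; have [h' _] := reg' k.
apply: meq_of_hell_cvg (Lamz k) (Lam'z k) _ h h'.
apply: filterS MLP => L [Om0 Omz]; split.
- exact: Qstar_dens_ge0.
- exact: integrable_Qstar_dens.
Qed.

Lemma clusterable_mix_eq {dist : X -> X -> R} {r} {Qf : forall L, set (mixing L)}
    {ML : forall L, probability X R -> mixing L} {K} {Lf : set (mixing K)} :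
  (forall L, Qf L `<=` P2 zeta dist r L) ->
  (forall L (Gam Q : probability X R),
      unique_proj zeta (Qf L) Gam Q -> Qf L (ML L Gam)) ->
  Lf `<=` P2 zeta dist r K -> QL_clusterable zeta Qf ML Lf ->
  forall (Gam : probability X R) Lam Lam', Lf Lam -> Lf Lam' ->
    is_mix Lam Gam -> is_mix Lam' Gam -> mix_eq Lam Lam'.
Proof.
move=> QfP2 MLQf LfP2 [Lf_reg [chi chiP]] Gam Lam Lam' LfLam LfLam' mixLam mixLam'.
have [[N projN] _ _] := Lf_reg _ LfLam _ mixLam.
apply: alpha_regular_mix_eq (chiP _ LfLam _ mixLam) (chiP _ LfLam' _ mixLam').
- exists N => // L /projN [Q /MLQf /QfP2 P2Om]; split; first by case: P2Om.
  exact: P2_abs_cont P2Om.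
- exact: P2_abs_cont (LfP2 _ LfLam).
- exact: P2_abs_cont (LfP2 _ LfLam').
Qed.

Lemma eq_bayes_partition K (Lam Lam' : mixing K) :
  (forall k x, Lam.1 k * dens zeta (Lam.2 k) x = Lam'.1 k * dens zeta (Lam'.2 k) x) ->
  bayes_partition zeta Lam = bayes_partition zeta Lam'.
Proof.
move=> eqw.
have eqE0 : E0 zeta Lam = E0 zeta Lam'.
  apply/seteqP; split=> x [i [j [ij e]]]; exists i, j; split=> //.
  - by rewrite -!eqw.
  - by rewrite !eqw.
have eq_argmax : is_argmax zeta Lam = is_argmax zeta Lam'.
  apply/funext => x; apply/funext => k.
  by rewrite /is_argmax; under eq_forall do rewrite !eqw.
by rewrite /bayes_partition /bayes_rel /X0 eqE0 eq_argmax.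
Qed.

Lemma mix_eq_bayes_partition K (Lam Lam' : mixing K) :
  mix_eq Lam Lam' -> bayes_partition zeta Lam = bayes_partition zeta Lam'.
Proof.
by case=> eqw eqm; apply: eq_bayes_partition => k x; rewrite eqw (meq_dens _ _ (eqm k)).
Qed.

End MixingMeasures.

Theorem proposition3
  (R : realType) (d : measure_display) (X : measurableType d)
  (dist : X -> X -> R) (r : R)
  (zeta : {sigma_finite_measure set X -> \bar R})
  (Qf : forall L : nat, set (@mixing R d X L))
  (ML : forall L : nat, probability X R -> @mixing R d X L)
  (K : nat) (Lf : set (@mixing R d X K)) :
  is_metric dist -> dcompact dist -> borel_of dist -> 0 < r ->
  (forall L, Qf L `<=` P2 zeta dist r L) ->
  (forall L, identifiable (Qf L)) ->
  (* ML L Gam is the mixing measure M_L(T_L Gam) of the (unique) projection *)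
  (forall L (Gam Q : probability X R), unique_proj zeta (Qf L) Gam Q ->
      Qf L (ML L Gam) /\ is_mix (ML L Gam) Q) ->
  (1 <= K)%N ->
  Lf `<=` P2 zeta dist r K ->
  QL_clusterable zeta Qf ML Lf ->
  forall Gam : probability X R, Mof Lf Gam ->
    (exists Lam, [/\ Lf Lam, is_mix Lam Gam &
       forall Lam', Lf Lam' -> is_mix Lam' Gam -> mix_eq Lam' Lam]) /\
    (forall Lam Lam', Lf Lam -> Lf Lam' -> is_mix Lam Gam -> is_mix Lam' Gam ->
       bayes_partition zeta Lam = bayes_partition zeta Lam').
Proof.
move=> _ _ _ _ QfP2 _ MLP _ LfP2 clusterable Gam [Lam LfLam mixLam].
have MLQf L Gam' Q : unique_proj zeta (Qf L) Gam' Q -> Qf L (ML L Gam').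
  by move=> /MLP [].
have uniq := clusterable_mix_eq zeta QfP2 MLQf LfP2 clusterable Gam.
split; first by exists Lam; split=> // Lam' LfLam' mixLam'; exact: uniq.
move=> Lam1 Lam2 Lf1 Lf2 mix1 mix2.
by apply: mix_eq_bayes_partition; exact: uniq.
Qed.
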